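(* Assume $2k+1 \le n/4$. Consider the random hard instance $\mathcal{D}$ and any randomized algorithm that makes exactly $n/4$ comparison queries. Let $C$ be the set of critical elements and $T$ the (random) set of elements that appear in at least one query made by the algorithm. Then $\mathbb{E}[|C \cap T|] \le \frac{2k+1}{2}$.
   Context: Model: $n$ elements, exactly $k$ corrupted; a tournament (comparison graph) says for each pair which is larger; restricted to uncorrupted elements it is acyclic, comparisons involving corrupted elements arbitrary. A comparison query reveals the orientation of one pair. Random hard instance $\mathcal{D}$: take $2k+1$ critical elements $c_0,\dots,c_{2k}$ consisting of the $k$ corrupted elements and the top $k+1$ uncorrupted elements, with comparisons among them forming the cyclic tournament in which $c_i$ is larger than $c_{i+1},\dots,c_{i+k}$ (indices mod $2k+1$); every critical element is larger than every non-critical element, and the $n-2k-1$ non-critical (uncorrupted) elements are totally ordered; then the labels (indices) of all $n$ elements are permuted uniformly at random. The set of critical elements is denoted $C$. Expectations are over the instance randomness and the algorithm's randomness. *)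

From mathcomp Require Import all_boot all_order all_algebra all_fingroup.
Set Implicit Arguments. Unset Strict Implicit. Unset Printing Implicit Defensive.
Import Order.TTheory GRing.Theory Num.Theory.

(* The labelling is a uniformly random
   permutation sigma : 'S_n; element x : 'I_n sits at "position" sigma x
   of the base structure:
   - positions 0 .. 2k are the critical elements c_0 .. c_{2k};
   - positions 2k+1 .. n-1 are the non-critical elements, totally ordered,
     smaller position = larger element.  *)

Definition is_critical (n k : nat) (sigma : 'S_n) (x : 'I_n) : bool :=
  (sigma x < 2 * k + 1)%N.

Definition beats (n k : nat) (sigma : 'S_n) (x y : 'I_n) : bool :=
  let i := nat_of_ord (sigma x) in
  let j := nat_of_ord (sigma y) in
  let m := (2 * k + 1)%N in
  if (i < m)%N then
    if (j < m)%N then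
      (* c_i beats c_{i+1}, ..., c_{i+k}  (indices mod 2k+1) *)
      (0 < (j + m - i) %% m <= k)%N
    else true
  else
    if (j < m)%N then false
    else (i < j)%N.

Definition critical_set (n k : nat) (sigma : 'S_n) : {set 'I_n} :=
  [set x | is_critical k sigma x].

(* A query-history: sequence of (queried pair, answer), the answer being
   true iff the first element is larger than the second. *)
Definition history (n : nat) := seq (('I_n * 'I_n) * bool).

Definition det_alg (n : nat) := history n -> 'I_n * 'I_n.

Fixpoint run (n k : nat) (alg : det_alg n) (sigma : 'S_n) (m : nat)
  : history n :=
  match m with
  | 0 => [::]
  | m'.+1 =>
      let h := run k alg sigma m' in
      let q := alg h in
      rcons h (q, beats k sigma q.1 q.2)
  end.

Definition touched (n k : nat) (alg : det_alg n) (sigma : 'S_n) (m : nat)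
  : {set 'I_n} :=
  [set x | has (fun e : ('I_n * 'I_n) * bool => (e.1.1 == x) || (e.1.2 == x))
               (run k alg sigma m)].

(* E[|C ∩ T|] for a randomized algorithm given as a probability
   distribution w over seeds s : S, each seed giving a deterministic
   adaptive algorithm alg s; sigma is uniform on 'S_n and independent of s. *)
Definition expected_hits (R : realFieldType) (n k : nat) (S : finType)
  (w : S -> R) (alg : S -> det_alg n) (m : nat) : R :=
  \sum_(s : S) w s *
    ((\sum_(sigma : 'S_n)
        (#|critical_set k sigma :&: touched k (alg s) sigma m|)%:R)
     / (n`!)%:R).

From mathcomp Require Import all_boot all_order all_algebra all_fingroup.
From mathcomp Require Import zify.
Import Order.TTheory GRing.Theory Num.Theory.
Set Implicit Arguments. Unset Strict Implicit. Unset Printing Implicit Defensive.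

(* It suffices to treat a deterministic algorithm, the bound being linear in
   the seed distribution.  Fix one, making m queries with 4m <= n.  Relabel
   each instance sigma by listing the elements in the order in which the
   algorithm first touches them: the canonical instance beta(sigma) maps i
   to the position of the i-th element so listed.  The map beta is
   injective, since the first j queries, and hence the answers to them, can
   be replayed from beta(sigma) alone (deferred decisions).  Every touched
   critical element has rank below 2m in this listing, so
   sum_sigma |C n T| <= sum_sigma #{i < 2m | beta(sigma) i <= 2k}, and as
   beta is a bijection of 'S_n this is the number of pairs (sigma, i < 2m)
   with sigma i <= 2k, that is at most 2m (2k+1) (n-1)! <= n! (2k+1) / 2. *)

(* Keeps first occurrences; unlike [undup], which keeps the last ones, it is
   compatible with extending the sequence to the right. *)
Definition undup_first (T : eqType) (s : seq T) : seq T := rev (undup (rev s)).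

Lemma mem_undup_first (T : eqType) (s : seq T) : undup_first s =i s.
Proof. by move=> x; rewrite mem_rev mem_undup mem_rev. Qed.

Lemma undup_first_uniq (T : eqType) (s : seq T) : uniq (undup_first s).
Proof. by rewrite rev_uniq undup_uniq. Qed.

Lemma size_undup_first (T : eqType) (s : seq T) : size (undup_first s) <= size s.
Proof. by rewrite size_rev -(size_rev s) size_undup. Qed.

Lemma undup_first_cat (T : eqType) (s t : seq T) :
  exists z, undup_first (s ++ t) = undup_first s ++ z.
Proof. by rewrite /undup_first rev_cat undup_cat rev_cat; eexists. Qed.

Lemma card_ord_lt n b : #|[set i : 'I_n | i < b]| <= b.
Proof.
rewrite cardE -(size_map val) -[X in _ <= X](size_iota 0).
apply: uniq_leq_size; first by rewrite map_inj_uniq ?enum_uniq //; apply: val_inj.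
by move=> y /mapP[x]; rewrite mem_enum inE => xb ->; rewrite mem_iota.
Qed.

Lemma sum_perm_lt_indep n c (i j : 'I_n) :
  \sum_(s : 'S_n) (s i < c : nat) = \sum_(s : 'S_n) (s j < c : nat).
Proof.
rewrite [LHS](reindex_inj (mulgI (tperm i j))) /=.
by apply: eq_bigr => s _; rewrite permM tpermL.
Qed.

Lemma sum_perm_lt n c (i : 'I_n) : n * \sum_(s : 'S_n) (s i < c : nat) <= n`! * c.
Proof.
have -> : n * \sum_(s : 'S_n) (s i < c : nat)
          = \sum_(s : 'S_n) #|[set j : 'I_n | s j < c]|.
  rewrite -[X in X * _](card_ord n) -sum_nat_const.
  rewrite (eq_bigr _ (fun j _ => sum_perm_lt_indep c i j)) exchange_big.
  apply: eq_bigr => s _; rewrite -sum1dep_card [RHS]big_mkcond.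
  by apply: eq_bigr => j _; case: (s j < c).
rewrite -card_Sn -sum_nat_const; apply: leq_sum => s _.
have -> : [set j | s j < c] = s @^-1: [set q : 'I_n | q < c].
  by apply/setP => j; rewrite !inE.
by rewrite card_preimset ?card_ord_lt //; apply: perm_inj.
Qed.

Lemma sum_card_perm_lt n c N :
  n * \sum_(s : 'S_n) #|[set i : 'I_n | (i < N) && (s i < c)]| <= N * (n`! * c).
Proof.
case: n => [|n].
  by rewrite big1 // => s _; apply/eqP; rewrite cards_eq0; apply/eqP/setP => -[].
have -> : \sum_(s : 'S_n.+1) #|[set i : 'I_n.+1 | (i < N) && (s i < c)]|
          = \sum_(i : 'I_n.+1 | i < N) \sum_(s : 'S_n.+1) (s i < c : nat).
  rewrite exchange_big; apply: eq_bigr => s _.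
  by rewrite -sum1dep_card big_mkcond [RHS]big_mkcond; apply: eq_bigr => i _; case: (i < N).
rewrite (eq_bigr _ (fun i _ => sum_perm_lt_indep c i ord0)) sum_nat_const mulnCA.
apply: leq_mul; last exact: sum_perm_lt.
by have := card_ord_lt n.+1 N; rewrite cardsE.
Qed.

Section Deterministic.
Variables (n k : nat) (alg : det_alg n).

Definition queried (sigma : 'S_n) j : seq 'I_n :=
  flatten [seq [:: e.1.1; e.1.2] | e <- run k alg sigma j].

Lemma run_prefix sigma j d : exists z, run k alg sigma (j + d) = run k alg sigma j ++ z.
Proof.
elim: d => [|d [z IH]]; first by exists [::]; rewrite addn0 cats0.
by rewrite addnS /= IH rcons_cat; eexists.
Qed.

Lemma queried_prefix sigma j d : exists z, queried sigma (j + d) = queried sigma j ++ z.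
Proof.
by rewrite /queried; have [z ->] := run_prefix sigma j d; rewrite map_cat flatten_cat; eexists.
Qed.

Lemma queriedS sigma j :
  let q := alg (run k alg sigma j) in queried sigma j.+1 = queried sigma j ++ [:: q.1; q.2].
Proof. by rewrite /queried /= map_rcons -cats1 flatten_cat. Qed.

Lemma size_queried sigma j : size (queried sigma j) = 2 * j.
Proof. by elim: j => [//|j IH]; rewrite queriedS size_cat IH /=; lia. Qed.

Lemma mem_touched sigma j x : (x \in touched k alg sigma j) = (x \in queried sigma j).
Proof.
rewrite inE /queried; elim: (run k alg sigma j) => [//|e s IH] /=.
by rewrite IH !inE (eq_sym x) (eq_sym x) orbA.
Qed.

Variable m : nat.

Definition first_touched sigma := undup_first (queried sigma m).

Definition touch_order sigma : seq 'I_n :=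
  first_touched sigma ++ [seq x <- enum 'I_n | x \notin first_touched sigma].

Lemma perm_touch_order sigma : perm_eq (touch_order sigma) (enum 'I_n).
Proof.
apply: uniq_perm; last by move=> x; rewrite mem_cat mem_filter mem_enum andbT orbN.
  rewrite cat_uniq undup_first_uniq filter_uniq ?enum_uniq // andbT.
  by apply/hasPn => x; rewrite mem_filter => /andP[].
exact: enum_uniq.
Qed.

Lemma size_touch_order sigma : size (touch_order sigma) = n.
Proof. by rewrite (perm_size (perm_touch_order sigma)) size_enum_ord. Qed.

Lemma mem_touch_order sigma x : x \in touch_order sigma.
Proof. by rewrite (perm_mem (perm_touch_order sigma)) mem_enum. Qed.

Lemma index_touch_order_lt sigma x : index x (touch_order sigma) < n.
Proof. by rewrite -[X in _ < X](size_touch_order sigma) index_mem mem_touch_order. Qed.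

Lemma nth_touch_order_inj sigma : injective (fun i : 'I_n => nth i (touch_order sigma) i).
Proof.
move=> i j /=; rewrite (set_nth_default j) ?size_touch_order // => /eqP.
rewrite nth_uniq ?size_touch_order ?(perm_uniq (perm_touch_order sigma)) ?enum_uniq //.
by move/eqP/val_inj.
Qed.

Definition relabel sigma : 'S_n := perm (@nth_touch_order_inj sigma).

Definition canonical_instance sigma : 'S_n := (relabel sigma * sigma)%g.

Lemma canonical_instanceE sigma i :
  canonical_instance sigma i = sigma (nth i (touch_order sigma) i).
Proof. by rewrite permM permE. Qed.

Lemma index_touch_order sigma x (P : seq 'I_n) :
  x \in P -> (exists z, queried sigma m = P ++ z) ->
  index x (touch_order sigma) = index x (undup_first P).
Proof.
rewrite -mem_undup_first => xP [z Ez].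
rewrite /touch_order /first_touched Ez; have [z' ->] := undup_first_cat P z.
by rewrite -catA index_cat xP.
Qed.

Lemma canonical_instance_agree s1 s2 j x :
  canonical_instance s1 = canonical_instance s2 -> j < m ->
  run k alg s1 j = run k alg s2 j -> x \in queried s1 j.+1 -> s1 x = s2 x.
Proof.
move=> Ec jm Erun xq.
have Eq : queried s2 j.+1 = queried s1 j.+1 by rewrite !queriedS /queried Erun.
have prefix s : queried s j.+1 = queried s1 j.+1 -> exists z, queried s m = queried s1 j.+1 ++ z.
  move=> Es; have [z Ez] := queried_prefix s j.+1 (m - j.+1).
  by rewrite subnKC // Es in Ez; exists z.
have I1 := index_touch_order xq (prefix s1 erefl).
have I2 := index_touch_order xq (prefix s2 Eq).
have lt := index_touch_order_lt s1 x; rewrite I1 in lt.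
have nth_rank s (d : 'I_n) : index x (touch_order s) = index x (undup_first (queried s1 j.+1)) ->
    nth d (touch_order s) (index x (undup_first (queried s1 j.+1))) = x.
  by move=> <-; rewrite nth_index ?mem_touch_order.
have := congr1 (fun s : 'S_n => s (Ordinal lt)) Ec.
by rewrite !canonical_instanceE /= (nth_rank s1 _ I1) (nth_rank s2 _ I2).
Qed.

Lemma canonical_instance_run s1 s2 j :
  canonical_instance s1 = canonical_instance s2 -> j <= m ->
  run k alg s1 j = run k alg s2 j.
Proof.
move=> Ec; elim: j => [//|j IH] jm; rewrite /= -IH ?(ltnW jm) //.
set q := alg _.
have Eq x : x \in [:: q.1; q.2] -> s1 x = s2 x.
  by move=> xq; apply: (canonical_instance_agree Ec jm); rewrite ?IH ?(ltnW jm) // queriedS mem_cat xq orbT.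
by rewrite /beats (Eq q.1) ?inE ?eqxx // (Eq q.2) ?inE ?eqxx ?orbT.
Qed.

Lemma canonical_instance_inj : injective canonical_instance.
Proof.
move=> s1 s2 Ec.
have Eorder : touch_order s1 = touch_order s2.
  by rewrite /touch_order /first_touched /queried (canonical_instance_run Ec).
have Erel : relabel s1 = relabel s2 by apply/permP => i; rewrite !permE /= Eorder.
by move: Ec; rewrite /canonical_instance Erel => /mulgI.
Qed.

Lemma card_hits_le sigma :
  #|critical_set k sigma :&: touched k alg sigma m|
  <= #|[set i : 'I_n | (i < 2 * m) && (canonical_instance sigma i < 2 * k + 1)]|.
Proof.
apply: leq_trans (leq_imset_card (relabel sigma) _).
apply: subset_leq_card; apply/subsetP => x.
rewrite in_setI mem_touched !inE /is_critical => /andP[cx tx].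
have xf : x \in first_touched sigma by rewrite mem_undup_first.
apply/imsetP; exists (Ordinal (index_touch_order_lt sigma x)); last first.
  by apply: val_inj; rewrite /= permE /= nth_index ?mem_touch_order.
rewrite inE canonical_instanceE /= nth_index ?mem_touch_order // cx andbT.
rewrite /touch_order index_cat xf -(size_queried sigma m).
by apply: leq_trans (size_undup_first _); rewrite index_mem.
Qed.

Lemma sum_card_hits :
  4 * m <= n ->
  2 * \sum_(sigma : 'S_n) #|critical_set k sigma :&: touched k alg sigma m|
  <= n`! * (2 * k + 1).
Proof.
move=> hm.
have hits : \sum_(sigma : 'S_n) #|critical_set k sigma :&: touched k alg sigma m|
    <= \sum_(s : 'S_n) #|[set i : 'I_n | (i < 2 * m) && (s i < 2 * k + 1)]|.
  rewrite [X in _ <= X](reindex_inj canonical_instance_inj) /=.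
  by apply: leq_sum => s _; apply: card_hits_le.
have [n0 | n_gt0] := posnP n.
  rewrite big1 // => sigma _; apply/eqP; rewrite -leqn0.
  by apply: leq_trans (max_card _) _; rewrite card_ord n0.
have count := sum_card_perm_lt n (2 * k + 1) (2 * m).
rewrite -(leq_pmul2l n_gt0) mulnCA.
apply: leq_trans (leq_mul (leqnn 2) (leq_trans (leq_mul (leqnn n) hits) count)) _.
by rewrite mulnA leq_mul //; lia.
Qed.

End Deterministic.

Local Open Scope ring_scope.

Theorem mainTheorem9 (R : realFieldType) (n k : nat) (S : finType)
  (w : S -> R) (alg : S -> det_alg n) :
  (2 * k + 1 <= n %/ 4)%N ->
  (forall s, 0 <= w s) ->
  \sum_(s : S) w s = 1 ->
  (forall s (h : history n), (alg s h).1 != (alg s h).2) ->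
  expected_hits k w alg (n %/ 4) <= (2 * k + 1)%:R / 2.
Proof.
move=> _ w_ge0 w_sum1 _.
have m_le : (4 * (n %/ 4) <= n)%N by rewrite mulnC leq_divM.
have -> : (2 * k + 1)%:R / 2 = \sum_(s : S) w s * ((2 * k + 1)%:R / 2) :> R.
  by rewrite -big_distrl /= w_sum1 mul1r.
rewrite /expected_hits.
apply: ler_sum => s _; apply: ler_wpM2l => //.
have nfact_gt0 : (0 : R) < (n`!)%:R by rewrite ltr0n fact_gt0.
rewrite ler_pdivrMr // -natr_sum mulrAC ler_pdivlMr ?ltr0n // -!natrM ler_nat.
by rewrite mulnC (mulnC _ n`!); apply: sum_card_hits.
Qed.
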